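(* Let $U$ be a countably infinite universe, $\mathcal{C}=(L_1,L_2,\ldots)$ a countably infinite collection of languages over $U$, $\mathcal{A}=\{A_g\}_{g\in[K]}$ a partition of $U$ into finitely many groups, $\alpha\in[0,1]$, let $m^\star_\alpha(L_i)$ be computed by the Representative Procedure in the context, and fix a non-decreasing $f:\mathbb{N}\to\mathbb{N}$ with $\lim_{t\to\infty}f(t)=\infty$. Then the Representative Algorithm in the context (with this $f$) generates non-uniformly with $\alpha$-representation from $\mathcal{C}$ with generation times $t^\star_\alpha(L_i)=\max(g(i),m^\star_\alpha(L_i)+1)$, where $g(i)$ is the smallest $j$ with $f(j)\ge i$: that is, for every $i$ and every enumeration of $L_i$, $\Pr_{x\sim\mathcal{G}_t}[x\in L_i\setminus S_t]=1$ for all $t$ with $|S_t|\ge t^\star_\alpha(L_i)$, and the algorithm is $\alpha$-representative with respect to $S_t$ at every $t\ge1$.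
   Context: A language is an infinite subset of $U$; a collection is a sequence of languages (repetitions allowed, entries distinguished by index). An enumeration of a language $L$ is a sequence $x_1,x_2,\ldots$ with every $x_t\in L$ and every $x\in L$ equal to some $x_t$. $S_t$ is the set of distinct strings among $x_1,\ldots,x_t$. Here a generating algorithm outputs at each time $t$ a probability distribution $\mathcal{G}_t$ on $U$. For a finite nonempty $T\subseteq U$, $\mathrm{emp}_T$ is the uniform distribution on $T$, and $\mathrm{emp}_t=\mathrm{emp}_{S_t}$. For a distribution $D$ on $U$, $D^{\mathcal{A}}(g)=\Pr_{x\sim D}[x\in A_g]$ for $g\in[K]$. The generator is $\alpha$-representative at time $t$ with respect to $S_t$ if $\max_{g\in[K]}|\mathrm{emp}_t^{\mathcal{A}}(g)-\mathcal{G}_t^{\mathcal{A}}(g)|\le\alpha$. Scarce groups: for a collection $\mathcal{D}$ of languages and finite $T\subseteq U$, let $B=\{g\in[K]: A_g\cap((\bigcap_{L\in\mathcal{D}}L)\setminus T)=\emptyset\}$. $T$ suffers group scarcity (w.r.t. $\mathcal{D}$ and $\mathcal{A}$) if some $g\in B$ has $\mathrm{emp}_T^{\mathcal{A}}(g)>\alpha$, or $\sum_{g\in B}\mathrm{emp}_T^{\mathcal{A}}(g)>\alpha(K-|B|)$. Representative Procedure. Set $\mathcal{C}'_0=()$. For $i=1,2,\ldots$: append $L_i$ to the end of $\mathcal{C}'_{i-1}$ to get $\mathcal{C}'_i=(L'_1,\ldots,L'_i)$, set $j=i$. Repeat: (i) let $T$ be a finite (nonempty) set of largest size for which there is a subcollection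 $\mathcal{D}$ of the entries $(L'_1,\ldots,L'_j)$ including $L'_j$, with $T\subseteq L$ for every $L\in\mathcal{D}$ and $T$ suffering group scarcity w.r.t. $\mathcal{D}$ and $\mathcal{A}$; $m_{\mathrm{chk}}=|T|$ ($0$ if no such $T$ exists). (ii) If $j\le1$ or $m_{\mathrm{chk}}>m^\star_\alpha(L'_{j-1})$, stop. (iii) Otherwise swap positions $j-1,j$, set $j\leftarrow j-1$, return to (i). On stopping, set $m^\star_\alpha(L_i)=m_{\mathrm{chk}}$. Representative Algorithm (parameter $f$). At time $t$, run the first $f(t)$ iterations of the Representative Procedure to get $\mathcal{C}'_{f(t)}=(L'_1,\ldots,L'_{f(t)})$. Initialize $I_t=()$; for $j=1,\ldots,f(t)$ in order: if $S_t\subseteq L'_j$ and $S_t$ does not suffer group scarcity w.r.t. $I_t\cup\{L'_j\}$ and $\mathcal{A}$, append $L'_j$ to $I_t$. If $I_t$ is empty, set $\mathcal{G}_t=\mathrm{emp}_t$. Otherwise let $B$ be the scarce groups w.r.t. $I_t$ and $S_t$; for each $g\in[K]\setminus B$ pick some $s_g\in A_g\cap((\bigcap_{L\in I_t}L)\setminus S_t)$, and set $\mathcal{G}_t(s_g)=\mathrm{emp}_t^{\mathcal{A}}(g)+\frac{1}{K-|B|}\sum_{h\in B}\mathrm{emp}_t^{\mathcal{A}}(h)$, with $\mathcal{G}_t(x)=0$ for all other $x$. *)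

From HB Require Import structures.
From mathcomp Require Import all_boot all_order all_algebra.
From mathcomp Require Import boolp classical_sets.
Set Implicit Arguments. Unset Strict Implicit. Unset Printing Implicit Defensive.
Import Order.TTheory GRing.Theory Num.Theory.
Local Open Scope ring_scope.

Definition infinite_set (U : eqType) (P : U -> Prop) : Prop :=
  ~ exists s : seq U, forall y, P y -> y \in s.

(* x_1, x_2, ... (x 0 is ignored) is an enumeration of the language P. *)
Definition enumerates (U : Type) (P : U -> Prop) (x : nat -> U) : Prop :=
  (forall t, (1 <= t)%N -> P (x t)) /\
  (forall y, P y -> exists2 t, (1 <= t)%N & x t = y).

Definition St (U : eqType) (x : nat -> U) (t : nat) : seq U :=
  undup [seq x k | k <- iota 1 t].

(* extended naturals: None stands for +infinity *)
Definition enat := option nat.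
Definition enat_lt (a b : enat) : bool :=
  match a, b with
  | Some m, Some n => (m < n)%N
  | Some _, None => true
  | None, _ => false
  end.
Definition enat_le_nat (a : enat) (n : nat) : bool :=
  if a is Some m then (m <= n)%N else false.

Definition swap (s : seq nat) (a b : nat) : seq nat :=
  [seq nth 0%N s (if k == a then b else if k == b then a else k) | k <- iota 0 (size s)].

Lemma mchk_bound_proof (P : nat -> Prop) (b : nat) :
  (forall n, P n -> (n <= b)%N) ->
  forall n, ((n == 0%N) || `[< P n >]) -> (n <= b)%N.
Proof. by move=> hb n /orP[/eqP -> //|/asboolP /hb]. Qed.

Lemma mchk_ex_proof (P : nat -> Prop) : exists n, ((n == 0%N) || `[< P n >]).
Proof. by exists 0%N. Qed.

(* max over {0} ∪ {n | P n} when bounded, infinity otherwise *)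
Definition esup (P : nat -> Prop) : enat :=
  match pselect (exists b, forall n, P n -> (n <= b)%N) with
  | left hb =>
      let b := cid hb in
      Some (@ex_maxn (fun n => (n == 0%N) || `[< P n >]) (sval b)
              (mchk_ex_proof P) (mchk_bound_proof (svalP b)))
  | right _ => None
  end.

Section Defs.
Variables (U : countType) (R : realFieldType) (K : nat) (grp : U -> 'I_K)
          (alpha : R) (L : nat -> set U).

(* finitely supported distributions on U, given as lists of atoms *)
Definition dist := seq (U * R).
Definition prob (D : dist) (P : U -> Prop) : R := \sum_(a <- D | `[< P a.1 >]) a.2.
Definition distA (D : dist) (g : 'I_K) : R := prob D (fun y => grp y = g).
(* uniform distribution on a duplicate-free list T *)
Definition emp (T : seq U) : dist := [seq (y, (size T)%:R^-1) | y <- T].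
Definition empA (T : seq U) (g : 'I_K) : R := distA (emp T) g.

(* intersection of the languages with indices in D (whole U if D = [::]) *)
Definition inter (D : seq nat) : set U := fun y => forall k, k \in D -> L k y.

Definition scarceG (D : seq nat) (T : seq U) (g : 'I_K) : Prop :=
  forall y, grp y = g -> inter D y -> y \in T.

Definition nscarce (D : seq nat) (T : seq U) : nat :=
  #|[pred g : 'I_K | `[< scarceG D T g >]]|.

Definition suffers (D : seq nat) (T : seq U) : Prop :=
  (exists g, scarceG D T g /\ alpha < empA T g) \/
  alpha * (K - nscarce D T)%:R < \sum_(g < K | `[< scarceG D T g >]) empA T g.

Definition chk (p : seq nat) (n : nat) : Prop :=
  exists (T : seq U) (D : seq nat),
    [/\ uniq T, T != [::], size T = n, {subset D <= p} & last 0%N p \in D] /\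
    (forall y, y \in T -> inter D y) /\ suffers D T.

Definition mchk (p : seq nat) : enat := esup (chk p).

(* inner loop: s is the current order, the new language sits at 1-indexed
   position j; ms gives the m* values already assigned *)
Fixpoint bubble (ms : nat -> enat) (s : seq nat) (j : nat) : seq nat * enat :=
  let m := mchk (take j s) in
  match j with
  | j'.+1 =>
      if j' is j''.+1 then
        if enat_lt (ms (nth 0%N s j'')) m then (s, m)
        else bubble ms (swap s j'' j') j'
      else (s, m)
  | 0 => (s, m)
  end.

(* after i iterations: the ordering C'_i (as indices) and the m* values *)
Fixpoint proc (i : nat) : seq nat * (nat -> enat) :=
  match i with
  | 0 => ([::], fun _ => Some 0%N)
  | i'.+1 =>
      let: (s, ms) := proc i' in
      let: (s', m) := bubble ms (rcons s i'.+1) i'.+1 in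
      (s', fun k => if k == i'.+1 then m else ms k)
  end.

Definition mstar (i : nat) : enat := (proc i).2 i.

Definition It (order : seq nat) (S : seq U) : seq nat :=
  foldl (fun I k => if `[< (forall y, y \in S -> L k y) /\ ~ suffers (rcons I k) S >]
                    then rcons I k else I) [::] order.

Section Alg.
Variables (f : nat -> nat) (x : nat -> U) (sel : nat -> 'I_K -> U).

Definition It_at (t : nat) : seq nat := It (proc (f t)).1 (St x t).

(* G_t, where sel t g is the chosen s_g at time t *)
Definition Gen (t : nat) : dist :=
  let S := St x t in
  let I := It_at t in
  if I is [::] then emp S else
  let extra := (K - nscarce I S)%:R^-1 *
               \sum_(h < K | `[< scarceG I S h >]) empA S h in
  [seq (sel t g, empA S g + extra) | g <- enum 'I_K & ~~ `[< scarceG I S g >]].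

Definition valid_sel : Prop :=
  forall t g, It_at t != [::] -> ~ scarceG (It_at t) (St x t) g ->
    [/\ grp (sel t g) = g, inter (It_at t) (sel t g) & sel t g \notin St x t].

End Alg.

Definition gmin (f : nat -> nat) (i : nat) : nat :=
  match pselect (exists j, (i <= f j)%N) with
  | left h => @ex_minn (fun j => (i <= f j)%N) h
  | right _ => 0%N
  end.

Definition tstar (f : nat -> nat) (i : nat) : enat :=
  if mstar i is Some m then Some (maxn (gmin f i) m.+1) else None.

End Defs.

From Pilot Require Import Defs.
From mathcomp Require Import all_boot all_order all_algebra.
From mathcomp Require Import boolp classical_sets.
From mathcomp Require Import zify.
Set Implicit Arguments. Unset Strict Implicit. Unset Printing Implicit Defensive.
Import Order.TTheory GRing.Theory Num.Theory.
Local Open Scope ring_scope.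

(* Once L_i sits in the ordering C', the Representative Procedure preserves the
   invariant that every subcollection of languages at or before L_i which
   contains L_i only has group-scarce common subsets of size at most
   m*(L_i): this holds on insertion by definition of m*, and a later language
   is only bubbled in front of L_i when its check value with L_i included does
   not exceed m*(L_i).  Hence once f(t) >= i and |S_t| > m*(L_i), S_t cannot
   suffer group scarcity w.r.t. the languages accepted before L_i together
   with L_i, so L_i enters I_t and all the mass of G_t lies in L_i \ S_t.
   Representativeness only needs that I_t does not suffer group scarcity:
   each scarce group loses at most alpha, and the others share the lost mass,
   each gaining at most alpha. *)

Lemma swap_cat (a : seq nat) (y z : nat) (b : seq nat) :
  swap (a ++ y :: z :: b) (size a) (size a).+1 = a ++ z :: y :: b.
Proof.
apply: (@eq_from_nth _ 0%N); first by rewrite /swap size_map size_iota !size_cat.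
move=> k; rewrite /swap size_map size_iota => hk.
rewrite (nth_map 0%N) ?size_iota // nth_iota // add0n.
case: (ltngtP k (size a)) => h.
- have -> : (k == (size a).+1) = false by apply/negbTE; rewrite neq_ltn ltnS ltnW.
  by rewrite !nth_cat h.
- case: eqP => [->|hne]; first by rewrite !nth_cat ltnn subnn ltnNge leqnSn /= subSnn.
  rewrite !nth_cat !ltnNge !(ltnW h) /=.
  by have -> : (k - size a = (k - size a).-2.+2)%N by lia.
- by rewrite h !nth_cat ltnn ltnNge leqnSn /= subSnn subnn.
Qed.

Lemma split_first (s : seq nat) (i : nat) :
  i \in s -> exists p q, s = p ++ i :: q /\ i \notin p.
Proof.
move=> hi; exists (take (index i s) s), (drop (index i s).+1 s); split.
  by rewrite -{1}(cat_take_drop (index i s) s) (drop_nth 0%N) ?index_mem // nth_index.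
by rewrite in_take ?ltnn.
Qed.

Definition upto (s : seq nat) (i : nat) : seq nat := take (index i s).+1 s.

Lemma upto_catl (p q : seq nat) (i : nat) : i \in p -> upto (p ++ q) i = upto p i.
Proof. by move=> hi; rewrite /upto index_cat hi takel_cat // index_mem. Qed.

Lemma upto_cat (p q : seq nat) (i : nat) : i \notin p -> upto (p ++ i :: q) i = rcons p i.
Proof.
move=> hi; rewrite /upto index_cat (negbTE hi) /= eqxx addn0.
by rewrite take_cat ltnNge leqnSn /= subSnn /= take0 cats1.
Qed.

Section Procedure.
Variables (U : countType) (R : realFieldType) (K : nat) (grp : U -> 'I_K)
          (alpha : R) (L : nat -> set U).

Local Notation mchk := (mchk grp alpha L).
Local Notation bubble := (bubble grp alpha L).
Local Notation proc := (proc grp alpha L).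
Local Notation mstar := (mstar grp alpha L).

Lemma bubbleSS ms s j : bubble ms s j.+2 =
  if enat_lt (ms (nth 0%N s j)) (mchk (take j.+2 s)) then (s, mchk (take j.+2 s))
  else bubble ms (swap s j j.+1) j.+1.
Proof. by []. Qed.

Lemma bubble_spec ms new j (a b : seq nat) : size a = j ->
  exists a1 a2, [/\ a = a1 ++ a2,
    bubble ms (a ++ new :: b) j.+1 = (a1 ++ new :: a2 ++ b, mchk (rcons a1 new)) &
    forall a2' y a2'', a2 = a2' ++ y :: a2'' ->
      ~~ enat_lt (ms y) (mchk (rcons (a1 ++ a2' ++ [:: y]) new))].
Proof.
elim: j a b => [|j IH] a b ha.
  case: a ha => // _; exists [::], [::]; split; rewrite /= ?take0 //.
  by move=> [|??] ?? [].
case/lastP: a ha => [|a' y]; first by case.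
rewrite size_rcons => -[ha'].
have Htake : take j.+2 (rcons a' y ++ new :: b) = rcons (rcons a' y) new.
  by rewrite take_cat size_rcons ha' ltnNge leqnSn /= subSnn /= take0 cats1.
have Hnth : nth 0%N (rcons a' y ++ new :: b) j = y.
  by rewrite nth_cat size_rcons ha' ltnSn nth_rcons ha' ltnn eqxx.
rewrite bubbleSS Htake Hnth.
case E: (enat_lt (ms y) (mchk (rcons (rcons a' y) new))).
  exists (rcons a' y), [::]; split => //; first by rewrite cats0.
  by move=> [|??] ?? [].
have -> : swap (rcons a' y ++ new :: b) j j.+1 = a' ++ new :: y :: b.
  by rewrite -cats1 -catA -ha' swap_cat.
have [a1 [a2 [Ha Hb Hc]]] := IH a' (y :: b) ha'; subst a'.
exists a1, (rcons a2 y); split.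
- by rewrite rcons_cat.
- by rewrite Hb -[rcons a2 y]cats1 -catA.
- move=> a2' z a2''; case/lastP: a2'' => [|a3 w].
    rewrite cats1 => /eqP; rewrite eqseq_rcons => /andP[/eqP <- /eqP <-].
    by rewrite -rcons_cat E.
  rewrite -rcons_cons -rcons_cat => /eqP; rewrite eqseq_rcons => /andP[/eqP H _].
  exact: Hc H.
Qed.

Lemma procS n : proc n.+1 =
  let: (s, m) := bubble (proc n).2 (rcons (proc n).1 n.+1) n.+1 in
  (s, fun k => if k == n.+1 then m else (proc n).2 k).
Proof. by rewrite /=; case: (proc n). Qed.

Lemma size_proc n : size (proc n).1 = n.
Proof.
elim: n => [//|n IH]; rewrite procS -cats1.
have [a1 [a2 [Ha -> _]]] := bubble_spec (proc n).2 n.+1 [::] IH.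
by rewrite /= size_cat /= cats0 -IH Ha size_cat addnS.
Qed.

Lemma proc_step n : exists a1 a2,
  [/\ (proc n).1 = a1 ++ a2,
      (proc n.+1).1 = a1 ++ n.+1 :: a2,
      (proc n.+1).2 n.+1 = mchk (rcons a1 n.+1),
      forall k, k != n.+1 -> (proc n.+1).2 k = (proc n).2 k &
      forall a2' y a2'', a2 = a2' ++ y :: a2'' ->
        ~~ enat_lt ((proc n).2 y) (mchk (rcons (a1 ++ a2' ++ [:: y]) n.+1))].
Proof.
have [a1 [a2 [Ha Hb Hc]]] := bubble_spec (proc n).2 n.+1 [::] (size_proc n).
exists a1, a2; rewrite procS -cats1 Hb cats0 /= eqxx; split => //.
by move=> k /negbTE ->.
Qed.

Lemma perm_proc n : perm_eq (proc n).1 (iota 1 n).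
Proof.
elim: n => [//|n IH]; have [a1 [a2 [Ha -> _ _ _]]] := proc_step n.
have -> : iota 1 n.+1 = rcons (iota 1 n) n.+1 by rewrite -cats1 -(addn1 n) iotaD /= addnC.
rewrite -[n.+1 :: a2]/([:: n.+1] ++ a2) perm_catCA /=.
by rewrite perm_sym perm_rcons perm_cons perm_sym -Ha.
Qed.

Lemma mem_proc n i : (i \in (proc n).1) = (0 < i <= n)%N.
Proof. by rewrite (perm_mem (perm_proc n)) mem_iota add1n ltnS. Qed.

Lemma proc_mstar n i : (i <= n)%N -> (proc n).2 i = mstar i.
Proof.
elim: n => [|n IH]; first by rewrite leqn0 => /eqP ->.
rewrite leq_eqVlt => /orP[/eqP -> //|hi].
have [a1 [a2 [_ _ _ Hk _]]] := proc_step n.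
by rewrite Hk ?IH // neq_ltn hi.
Qed.

Definition scarcity_witness (D : seq nat) (n : nat) : Prop :=
  exists T : seq U, [/\ uniq T, T != [::] & size T = n] /\
    (forall y, y \in T -> inter L D y) /\ suffers grp alpha L D T.

Lemma witness_le_mchk p D n b : mchk p = Some b ->
  {subset D <= p} -> last 0%N p \in D -> scarcity_witness D n -> (n <= b)%N.
Proof.
rewrite /Defs.mchk /esup; case: pselect => // hb [<-] hDp hlast [T [[hu hT0 hn] hT]].
case: ex_maxnP => k _; apply; apply/orP; right; apply/asboolP.
by exists T, D.
Qed.

Definition upto_bound (s : seq nat) (i m : nat) : Prop :=
  forall D n, {subset D <= upto s i} -> i \in D -> scarcity_witness D n -> (n <= m)%N.

Lemma upto_bound_insert i m : (0 < i)%N -> mstar i = Some m -> upto_bound (proc i).1 i m.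
Proof.
case: i => [//|i] _ hm.
have [a1 [a2 [Ha -> Hm _ _]]] := proc_step i.
have : i.+1 \notin (proc i).1 by rewrite mem_proc ltnn andbF.
rewrite Ha mem_cat negb_or => /andP[hia1 _].
rewrite /upto_bound upto_cat // => D n hD hiD.
by apply: (witness_le_mchk (p := rcons a1 i.+1)) hD _; rewrite ?last_rcons // -Hm.
Qed.

Lemma upto_bound_step n i m : i \in (proc n).1 -> (proc n).2 i = Some m ->
  upto_bound (proc n).1 i m -> upto_bound (proc n.+1).1 i m.
Proof.
move=> hi hm.
have [a1 [a2 [Ha -> _ _ Hpass]]] := proc_step n.
have hnew : n.+1 \notin a1 ++ a2 by rewrite -Ha mem_proc ltnn andbF.
case: (boolP (i \in a1)) => hia1; first by rewrite /upto_bound Ha !upto_catl.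
have [a2' [a2'' [Ha2 hia2']]] : exists a2' a2'', a2 = a2' ++ i :: a2'' /\ i \notin a2'.
  by apply: split_first; move: hi; rewrite Ha mem_cat (negbTE hia1).
have hin : i != n.+1 by apply: contraNneq hnew => <-; rewrite -Ha.
rewrite /upto_bound Ha Ha2 catA (catA a1 (n.+1 :: a2') (i :: a2'')) !upto_cat; first last.
- by rewrite mem_cat negb_or hia1.
- by rewrite mem_cat in_cons negb_or hia1 /= negb_or hin.
move=> IH D k hD hiD hw.
case: (boolP (n.+1 \in D)) => hnD.
  (* L_(n+1) passed L_i, so its check value just behind L_i is at most m. *)
  have := Hpass a2' i a2'' Ha2; rewrite hm.
  case E: (mchk (rcons (a1 ++ a2' ++ [:: i]) n.+1)) => [b|] /= hbm //.
  rewrite -leqNgt in hbm; apply: leq_trans hbm.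
  apply: (witness_le_mchk E) _ _ hw; last by rewrite last_rcons.
  move=> y /hD; rewrite !(mem_rcons, in_cons, mem_cat) in_nil orbF.
  by move: (y == i) (y \in a1) (y == n.+1) (y \in a2') => [] [] [] [] /=.
apply: (IH D k) => // y hy; have hyn : y != n.+1 by apply: contraNneq hnD => <-.
by move: (hD y hy); rewrite !(mem_rcons, in_cons, mem_cat) (negbTE hyn).
Qed.

Lemma upto_bound_mstar i m n : (0 < i <= n)%N -> mstar i = Some m ->
  upto_bound (proc n).1 i m.
Proof.
case/andP=> hi0; elim: n => [|n IH]; first by case: i hi0.
rewrite leq_eqVlt => /orP[/eqP <-|hin] hm; first exact: upto_bound_insert.
apply: upto_bound_step (IH hin hm); first by rewrite mem_proc hi0.
by rewrite proc_mstar.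
Qed.

End Procedure.

Section Distributions.
Variables (U : countType) (R : realFieldType) (K : nat) (grp : U -> 'I_K).

Lemma sum_distA (D : dist U R) : \sum_(h < K) distA grp D h = \sum_(a <- D) a.2.
Proof.
elim: D => [|a D IH]; first by rewrite big_nil big1 // => h _; rewrite /distA /prob big_nil.
rewrite big_cons -IH /distA /prob.
under eq_bigr do rewrite big_cons.
rewrite (bigD1 (grp a.1)) //= asboolT // [in RHS](bigD1 (grp a.1)) //= -addrA.
congr (_ + (_ + _)); apply: eq_bigr => h hne.
by rewrite asboolF // => /eqP; rewrite eq_sym (negbTE hne).
Qed.

Lemma emp_mass (S : seq U) : S != [::] -> \sum_(a <- emp R S) a.2 = 1.
Proof.
move=> hS; rewrite big_map big_const_seq count_predT iter_addr_0.
by rewrite -[_ *+ size S]mulr_natr mulVf // pnatr_eq0 size_eq0.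
Qed.

Lemma empA_ge0 (S : seq U) g : 0 <= empA R grp S g.
Proof. by rewrite /empA /distA /prob big_map; apply: sumr_ge0 => y _; rewrite invr_ge0. Qed.

Lemma sum_empA (S : seq U) : S != [::] -> \sum_(h < K) empA R grp S h = 1.
Proof. by move=> hS; rewrite /empA sum_distA emp_mass. Qed.

Lemma distA_pick (sc : 'I_K -> bool) (sel : 'I_K -> U) (w : 'I_K -> R) h :
  (forall g, ~~ sc g -> grp (sel g) = g) ->
  distA grp [seq (sel g, w g) | g <- enum 'I_K & ~~ sc g] h = if sc h then 0 else w h.
Proof.
move=> hsel; rewrite /distA /prob big_map big_filter_cond big_mkcond /=.
rewrite big_enum_cond big_mkcond /= (bigD1 h) //= big1 ?addr0.
  by case: (boolP (sc h)) => //= hs; rewrite asboolT //; apply: hsel.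
move=> g hg; case: (boolP (sc g)) => //= hsg.
by rewrite asboolF // hsel // => /eqP; rewrite (negbTE hg).
Qed.

Lemma prob_supported (D : dist U R) (P : U -> Prop) :
  (forall a, a \in D -> P a.1) -> prob D P = \sum_(a <- D) a.2.
Proof.
move=> hP; rewrite /prob big_seq_cond [RHS]big_seq; apply: eq_bigl => a.
by case: (boolP (a \in D)) => //= h; rewrite asboolT //; apply: hP.
Qed.

End Distributions.

Section Generator.
Variables (U : countType) (R : realFieldType) (K : nat) (grp : U -> 'I_K)
          (alpha : R) (L : nat -> set U).

Local Notation suffers := (suffers grp alpha L).
Local Notation scarce I S g := `[< scarceG grp L I S g >].
Local Notation empA := (empA R grp).

Definition accept (S : seq U) (I : seq nat) (k : nat) : seq nat :=
  if `[< (forall y, y \in S -> L k y) /\ ~ suffers (rcons I k) S >] then rcons I k else I.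

Lemma It_foldl order S : It grp alpha L order S = foldl (accept S) [::] order.
Proof. by []. Qed.

Lemma foldl_accept_subset S p acc : {subset acc <= foldl (accept S) acc p}.
Proof.
elim: p acc => [|k p IH] acc y hy //=; apply: IH; rewrite /accept.
by case: ifP => // _; rewrite mem_rcons in_cons hy orbT.
Qed.

Lemma mem_foldl_accept S p acc k : k \in foldl (accept S) acc p ->
  k \in acc \/ (k \in p /\ forall y, y \in S -> L k y).
Proof.
elim: p acc => [|a p IH] acc /=; first by left.
move/IH => [|[hk hL]]; last by right; rewrite in_cons hk orbT.
rewrite /accept; case: ifP => [/asboolP [hS _]|_]; last by left.
rewrite mem_rcons in_cons => /orP[/eqP ->|]; last by left.
by right; rewrite mem_head.
Qed.

Lemma foldl_accept_nsuffers S p acc :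
  foldl (accept S) acc p = acc \/ ~ suffers (foldl (accept S) acc p) S.
Proof.
elim: p acc => [|a p IH] acc /=; first by left.
case: (IH (accept S acc a)) => [->|]; last by right.
by rewrite /accept; case: ifP => [/asboolP [_ h]|_]; [right | left].
Qed.

Lemma It_nsuffers order S : It grp alpha L order S != [::] ->
  ~ suffers (It grp alpha L order S) S.
Proof. by rewrite It_foldl; case: (foldl_accept_nsuffers S order [::]) => [->|]. Qed.

Lemma mem_It order S i : i \in order -> (forall y, y \in S -> L i y) ->
  (forall D, {subset D <= upto order i} -> i \in D ->
     (forall y, y \in S -> inter L D y) -> ~ suffers D S) ->
  i \in It grp alpha L order S.
Proof.
move=> hi hS; have [p [q [-> hip]]] := split_first hi.
rewrite It_foldl upto_cat // foldl_cat /= => hD; apply: foldl_accept_subset.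
set I := foldl (accept S) [::] p.
have hI k : k \in I -> k \in p /\ forall y, y \in S -> L k y by case/mem_foldl_accept.
rewrite /accept asboolT ?mem_rcons ?mem_head //; split => //.
apply: hD => [k||y hy k].
- by rewrite !mem_rcons !in_cons => /orP[->//|/hI[-> _]]; rewrite orbT.
- by rewrite mem_rcons mem_head.
- by rewrite mem_rcons in_cons => /orP[/eqP ->|/hI[_ hk]]; [exact: hS | exact: hk].
Qed.

Definition extra_mass (I : seq nat) (S : seq U) : R :=
  (K - nscarce grp L I S)%:R^-1 * \sum_(h < K | scarce I S h) empA S h.

Definition redistribute (I : seq nat) (S : seq U) (sel : 'I_K -> U) : dist U R :=
  [seq (sel g, empA S g + extra_mass I S) | g <- enum 'I_K & ~~ scarce I S g].

Lemma Gen_redistribute f x sel t : It_at grp alpha L f x t != [::] ->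
  Gen grp alpha L f x sel t = redistribute (It_at grp alpha L f x t) (St x t) (sel t).
Proof. by rewrite /Gen; case: (It_at grp alpha L f x t). Qed.

Section Redistribution.
Variables (I : seq nat) (S : seq U) (sel : 'I_K -> U).
Hypothesis nsuffers_IS : ~ suffers I S.
Hypothesis sel_grp : forall g, ~~ scarce I S g -> grp (sel g) = g.

Lemma scarce_empA_le g : scarceG grp L I S g -> empA S g <= alpha.
Proof. by move=> hg; rewrite leNgt; apply/negP => hlt; apply: nsuffers_IS; left; exists g. Qed.

Lemma sum_scarce_empA_le :
  \sum_(h < K | scarce I S h) empA S h <= alpha * (K - nscarce grp L I S)%:R.
Proof. by rewrite leNgt; apply/negP => hlt; apply: nsuffers_IS; right. Qed.

Lemma extra_mass_le : 0 <= alpha -> extra_mass I S <= alpha.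
Proof.
move=> ha; rewrite /extra_mass; set c := (K - _)%N.
have [->|hc] := eqVneq c 0%N; first by rewrite invr0 mul0r.
rewrite ler_pdivrMl ?ltr0n ?lt0n // mulrC; exact: sum_scarce_empA_le.
Qed.

Lemma distA_redistribute h : distA grp (redistribute I S sel) h =
  if scarce I S h then 0 else empA S h + extra_mass I S.
Proof. exact: distA_pick. Qed.

Lemma redistribute_repr g : 0 <= alpha ->
  `|empA S g - distA grp (redistribute I S sel) g| <= alpha.
Proof.
move=> ha; rewrite distA_redistribute.
case: (boolP (scarce I S g)) => [/asboolP hg|_].
  by rewrite subr0 ger0_norm ?empA_ge0 //; apply: scarce_empA_le.
rewrite opprD addNKr normrN ger0_norm ?extra_mass_le //.
by rewrite mulr_ge0 ?invr_ge0 ?ler0n ?sumr_ge0 // => h _; apply: empA_ge0.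
Qed.

Lemma redistribute_mass : S != [::] -> \sum_(a <- redistribute I S sel) a.2 = 1.
Proof.
move=> hS; set c := (K - nscarce grp L I S)%N.
have hcard : #|[pred h | ~~ scarce I S h]| = c.
  have := cardC [pred g | scarce I S g]; rewrite card_ord => hK.
  rewrite /c /nscarce -[X in (X - _)%N]hK addKn.
  by apply: eq_card => h; rewrite !inE.
have hall : \sum_(h < K) empA S h = 1 by apply: sum_empA.
rewrite (bigID (fun h => scarce I S h)) /= in hall.
(* If every group were scarce, the whole mass 1 of S would exceed alpha * 0. *)
have hc : c != 0%N.
  apply/eqP => hc0; have hnone := card0_eq (etrans hcard hc0).
  rewrite [X in _ + X]big_pred0 ?addr0 in hall; last by move=> h; have := hnone h; rewrite !inE.
  by move: sum_scarce_empA_le; rewrite -/c hc0 mulr0 hall ler10.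
rewrite -(sum_distA grp); under eq_bigr do rewrite distA_redistribute.
rewrite (bigID (fun h => scarce I S h)) /= big1 ?add0r; last by move=> h ->.
under eq_bigr => h /negbTE -> do [].
rewrite big_split /= sumr_const hcard -mulr_natl /extra_mass -/c mulrA mulfV ?pnatr_eq0 //.
by rewrite mul1r addrC.
Qed.

End Redistribution.

Section Algorithm.
Variables (f : nat -> nat) (x : nat -> U) (sel : nat -> 'I_K -> U).
Hypothesis sel_valid : valid_sel grp alpha L f x sel.

Local Notation It_at := (It_at grp alpha L f x).
Local Notation Gen := (Gen grp alpha L f x sel).

Lemma mem_It_at t i m : (0 < i <= f t)%N -> mstar grp alpha L i = Some m ->
  (m < size (St x t))%N -> (forall y, y \in St x t -> L i y) -> i \in It_at t.
Proof.
move=> hi hm hmS hSL; apply: mem_It => //; first by rewrite mem_proc.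
move=> D hD hiD hDS hs; suff : (size (St x t) <= m)%N by rewrite leqNgt hmS.
apply: (upto_bound_mstar hi hm hD hiD); exists (St x t); split=> //; split=> //.
- exact: undup_uniq.
- by apply: contraTneq hmS => ->.
Qed.

Lemma Gen_repr t g : 0 <= alpha -> `|empA (St x t) g - distA grp (Gen t) g| <= alpha.
Proof.
move=> ha; have [h0|hne] := eqVneq (It_at t) [::].
  by rewrite /Defs.Gen h0 subrr normr0.
rewrite Gen_redistribute //; apply: redistribute_repr => //; first exact: It_nsuffers.
by move=> g' /asboolPn hg; case: (sel_valid hne hg).
Qed.

Lemma Gen_fresh t i : St x t != [::] -> i \in It_at t ->
  prob (Gen t) (fun y => L i y /\ y \notin St x t) = 1.
Proof.
move=> hS hi; have hne : It_at t != [::] by apply: contraTneq hi => ->.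
have hnsuff := It_nsuffers hne.
rewrite Gen_redistribute // prob_supported ?redistribute_mass //.
  by move=> g /asboolPn hg; case: (sel_valid hne hg).
move=> a /mapP[g]; rewrite mem_filter => /andP[/asboolPn hg _] -> /=.
by case: (sel_valid hne hg) => _ hint ?; split=> //; apply: hint.
Qed.

End Algorithm.
End Generator.

Lemma gmin_spec (f : nat -> nat) i : (exists j, (i <= f j)%N) -> (i <= f (gmin f i))%N.
Proof. by move=> h; rewrite /gmin; case: pselect => // h'; case: ex_minnP. Qed.

Lemma size_St (U : eqType) (x : nat -> U) t : (size (St x t) <= t)%N.
Proof. by rewrite /St (leq_trans (size_undup _)) // size_map size_iota. Qed.

Lemma mem_St (U : eqType) (x : nat -> U) t y : y \in St x t -> exists2 k, (1 <= k)%N & x k = y.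
Proof. by rewrite /St mem_undup => /mapP [k]; rewrite mem_iota => /andP[h _] ->; exists k. Qed.

Unset Implicit Arguments.
Set Strict Implicit.

Theorem mainTheorem8 (U : countType) (R : realFieldType) (K : nat)
  (grp : U -> 'I_K) (alpha : R) (L : nat -> set U) (f : nat -> nat)
  (hU : infinite_set (fun _ : U => True))
  (hL : forall i, (1 <= i)%N -> infinite_set (L i))
  (halpha : 0 <= alpha <= 1)
  (hfmono : forall a b, (a <= b)%N -> (f a <= f b)%N)
  (hflim : forall n, exists T, forall t, (T <= t)%N -> (n <= f t)%N) :
  forall i, (1 <= i)%N ->
  forall x : nat -> U, enumerates (L i) x ->
  forall sel : nat -> 'I_K -> U, valid_sel grp alpha L f x sel ->
    (forall t, enat_le_nat (tstar grp alpha L f i) (size (St x t)) ->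
       prob (Gen grp alpha L f x sel t) (fun y => L i y /\ y \notin St x t) = 1)
    /\
    (forall t, (1 <= t)%N -> forall g : 'I_K,
       `|empA R grp (St x t) g - distA grp (Gen grp alpha L f x sel t) g| <= alpha).
Proof.
move=> i hi x [hxL _] sel hsel; have ha0 : 0 <= alpha by case/andP: halpha.
split=> [t|t _ g]; last exact: Gen_repr.
rewrite /tstar; case hm: (mstar grp alpha L i) => [m|] //=.
rewrite geq_max => /andP[hg hmS].
have hft : (i <= f t)%N.
  have [T hT] := hflim i; apply: leq_trans (gmin_spec (ex_intro _ T (hT T (leqnn T)))) _.
  by apply: hfmono; apply: leq_trans hg (size_St x t).
have hSL y : y \in St x t -> L i y by case/mem_St => k hk <-; apply: hxL.
apply: Gen_fresh => //; first by apply: contraTneq hmS => ->.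
by apply: (mem_It_at (m := m)) => //; rewrite hi.
Qed.
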